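(* Let $\mathbb{R}^p=E^q\oplus E^{p-q}$ be a decomposition with $\dim E^q=q\ge1$ such that the image of $E^q$ in $\mathbb{R}^p/\mathbb{Z}^p$ is dense, fix a scalar product on $E^q$, and let $A\in\mathrm{GL}_p(\mathbb{Z})$ preserve $E^q$ and $E^{p-q}$ with $A|_{E^q}$ a similarity. Then there exists a basis of $\mathbb{R}^p$ consisting of vectors of $\mathbb{Z}^p$ in which the matrix of $A$ is block diagonal, each diagonal block having integer entries and a characteristic polynomial which is irreducible over $\mathbb{Z}$. *)

From HB Require Import structures.
From mathcomp Require Import all_boot all_order all_algebra.
From mathcomp Require Import reals.
Set Implicit Arguments. Unset Strict Implicit. Unset Printing Implicit Defensive.
Import Order.TTheory GRing.Theory Num.Theory.
Local Open Scope ring_scope.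

(* Vectors of R^n are column vectors 'cV[R]_n; matrices act by left product. *)

Definition mxZR (R : realType) m n (M : 'M[int]_(m, n)) : 'M[R]_(m, n) :=
  map_mx (fun z : int => z%:~R) M.

Definition scal (R : realType) n (S : 'M[R]_n) (u v : 'cV[R]_n) : R :=
  (u^T *m S *m v) 0 0.

Definition scalar_product (R : realType) n (S : 'M[R]_n) : Prop :=
  S^T = S /\ forall c : 'cV[R]_n, c != 0 -> 0 < scal S c c.

Definition irreducible_over_Z (p : {poly int}) : Prop :=
  p != 0 /\ ~~ (p \is a GRing.unit) /\
  forall a b : {poly int}, p = a * b -> a \is a GRing.unit \/ b \is a GRing.unit.

(* A restricted to E^q is a similarity, hence normal for the scalar product,
   so no nonzero polynomial in it is nilpotent. If p(A) has rational
   coefficients and p(A)^2 = 0, then p(A) vanishes on E^q, and its rational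
   rows, being orthogonal to E^q, vanish because E^q + Z^p is dense. Hence
   Q[A] is reduced and the minimal polynomial of A over Q is squarefree.
   Integer bases are then built greedily: outside the span of the blocks
   obtained so far there is an integer vector v killed by g(A) for a monic
   irreducible integer factor g of the characteristic polynomial (Gauss's
   lemma), and v, Av, ..., A^(deg g - 1) v stay independent modulo that
   A-stable span; in this Krylov basis A acts by the companion matrix of g. *)

Set Warnings "-notation-overridden,-ambiguous-paths,-notation-incompatible-prefix".
From HB Require Import structures.
From mathcomp Require Import all_boot all_order all_algebra.
From mathcomp Require Import reals.
From Stdlib Require Import Classical.
From mathcomp Require Import ring zify lra.
Import Order.TTheory GRing.Theory Num.Theory.

Set Implicit Arguments. Unset Strict Implicit. Unset Printing Implicit Defensive.
Local Open Scope ring_scope.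

Lemma exists_irreducible_dvdp (F : fieldType) (f : {poly F}) :
  (1 < size f)%N -> exists2 g, irreducible_poly g & g %| f.
Proof.
elim: {f}(size f).+1 {-2}f (ltnSn (size f)) => // s IH f f_lt f_gt1.
have [f_irr | f_red] := classic (irreducible_poly f); first by exists f.
have [q q_not_assoc] : exists q : {poly F}, ~ (size q != 1%N -> q %| f -> q %= f).
  by apply: not_all_ex_not => f_irr; apply: f_red.
have [q_neq1 | /negbTE q1] := boolP (size q != 1%N); last first.
  by case: q_not_assoc; rewrite q1.
have [qf | /negbTE q_ndvd] := boolP (q %| f); last by case: q_not_assoc; rewrite q_ndvd.
have [q_f | q_nf] := boolP (q %= f); first by case: q_not_assoc.
have f_neq0 : f != 0 by rewrite -size_poly_gt0 (ltn_trans _ f_gt1).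
have q_neq0 : q != 0 by apply: contra_neq f_neq0 => q0; move: qf; rewrite q0 dvd0p => /eqP.
have q_lt : (size q < size f)%N.
  rewrite ltn_neqAle dvdp_leq // andbT; apply: contra q_nf => /eqP size_qf.
  by rewrite -dvdp_size_eqp // size_qf.
have q_gt1 : (1 < size q)%N by rewrite ltn_neqAle eq_sym q_neq1 size_poly_gt0.
have [g g_irr gq] := IH q (leq_trans q_lt f_lt) q_gt1.
by exists g; last exact: dvdp_trans gq qf.
Qed.

Lemma horner_mxM (R : comNzRingType) n (N : 'M[R]_n.+1) (p q : {poly R}) :
  horner_mx N (p * q) = horner_mx N p *m horner_mx N q.
Proof. by rewrite rmorphM /= mulmxE. Qed.

Definition horner_reduced (R : comNzRingType) n (N : 'M[R]_n.+1) :=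
  forall p : {poly R}, horner_mx N p ^+ 2 = 0 -> horner_mx N p = 0.

Section ReducedHorner.

Variables (F : fieldType) (n : nat) (N : 'M[F]_n.+1).
Hypothesis N_reduced : horner_reduced N.

Lemma mxminpoly_sqfree (g : {poly F}) : (1 < size g)%N -> ~~ (g * g %| mxminpoly N).
Proof.
move=> g_gt1; apply/negP => /dvdpP [h Dm].
have m_neq0 : mxminpoly N != 0 := monic_neq0 (mxminpoly_monic N).
have g_neq0 : g != 0 by rewrite -size_poly_gt0 (ltn_trans _ g_gt1).
have hg_neq0 : h * g != 0.
  by apply: contra_neq m_neq0; rewrite Dm mulrA => ->; rewrite mul0r.
have : horner_mx N (h * g) = 0.
  apply: N_reduced; rewrite -rmorphXn /= (_ : _ ^+ 2 = mxminpoly N * h).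
    by rewrite horner_mxM mx_root_minpoly mul0mx.
  by rewrite Dm; ring.
move/mxminpoly_min/(dvdp_leq hg_neq0); rewrite Dm mulrA size_mul //.
by move: (size (h * g)) (size g) g_gt1 => s t; rewrite -subn1; lia.
Qed.

Lemma coprimep_irreducible_divp (f g : {poly F}) :
  f %| mxminpoly N -> irreducible_poly g -> g %| f -> coprimep g (f %/ g).
Proof.
move=> fm g_irr gf; rewrite irreducible_poly_coprime //.
apply: contra (mxminpoly_sqfree g_irr.1) => g_dvd; apply: dvdp_trans fm.
by rewrite -(divpK gf) dvdp_mul.
Qed.

(* Splitting u along a Bezout relation between an irreducible factor g of f and
   f / g, one of the two pieces stays outside W. *)
Lemma irreducible_annihilator_outside m (W : 'M[F]_(m, n.+1)) (f : {poly F})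
    (u : 'rV_n.+1) :
  f %| mxminpoly N -> u *m horner_mx N f = 0 -> ~~ (u <= W)%MS ->
  exists2 g, irreducible_poly g /\ g %| f &
    exists2 v : 'rV_n.+1, ~~ (v <= W)%MS & v *m horner_mx N g = 0.
Proof.
have m_neq0 : mxminpoly N != 0 := monic_neq0 (mxminpoly_monic N).
elim: {f}(size f).+1 {-2}f (ltnSn (size f)) u => // s IH f f_lt u fm uf uW.
have f_neq0 : f != 0.
  by apply: contra_neq m_neq0 => f0; move: fm; rewrite f0 dvd0p => /eqP.
have [f_le1 | f_gt1] := leqP (size f) 1.
  have Df := size1_polyC f_le1; move: f_neq0 uf; rewrite Df horner_mx_C polyC_eq0.
  move=> c_neq0; rewrite mul_mx_scalar => /eqP; rewrite scaler_eq0 (negPf c_neq0) /=.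
  by move=> /eqP u0; move: uW; rewrite u0 sub0mx.
have [g g_irr gf] := exists_irreducible_dvdp f_gt1.
set h := f %/ g; have Df : h * g = f by rewrite divpK.
have /Bezout_eq1_coprimepP [[a b] /= Dab] := coprimep_irreducible_divp fm g_irr gf.
pose u1 := u *m horner_mx N (a * g); pose u2 := u *m horner_mx N (b * h).
have Du : u = u1 + u2 by rewrite -mulmxDr -rmorphD /= Dab rmorph1 mulmx1.
have u2g : u2 *m horner_mx N g = 0.
  by rewrite -mulmxA -horner_mxM -mulrA Df mulrC horner_mxM mulmxA uf mul0mx.
have [u2W | u2W] := boolP (u2 <= W)%MS; last by exists g => //; exists u2.
have u1W : ~~ (u1 <= W)%MS by apply: contra uW => u1W; rewrite Du addmx_sub.
have u1h : u1 *m horner_mx N h = 0.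
  rewrite -mulmxA -horner_mxM (_ : a * g * h = f * a); last by rewrite -Df; ring.
  by rewrite horner_mxM mulmxA uf mul0mx.
have hf : h %| f by rewrite -Df dvdp_mulr.
have h_lt : (size h < s)%N.
  have h_neq0 : h != 0 by apply: contra_neq f_neq0; rewrite -Df => ->; rewrite mul0r.
  move: f_lt; rewrite -Df size_mul ?(irredp_neq0 g_irr) //.
  by move: (size h) (size g) g_irr.1 (size_poly_gt0 h) => x y; rewrite h_neq0 -subn1; lia.
have [g' [g'_irr g'h] v_out] := IH h h_lt u1 (dvdp_trans hf fm) u1h u1W.
by exists g' => //; split; last exact: dvdp_trans g'h hf.
Qed.

End ReducedHorner.

Lemma row_free_col_mx (F : fieldType) d m n (X : 'M[F]_(d, n)) (W : 'M[F]_(m, n)) :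
  row_free W -> (forall w : 'rV_d, (w *m X <= W)%MS -> w = 0) ->
  row_free (col_mx X W).
Proof.
move=> W_free X_free; apply: inj_row_free => u.
rewrite -[u]hsubmxK mul_row_col => /eqP; rewrite addr_eq0 => /eqP Du.
have ul0 : lsubmx u = 0 by apply: X_free; rewrite Du -mulNmx submxMl.
move: Du; rewrite ul0 mul0mx => /esym/eqP; rewrite oppr_eq0 -(mul0mx _ W).
by move=> /eqP /(row_free_inj W_free) ->; rewrite row_mx0.
Qed.

Lemma horner_mx_monic (R : comNzRingType) n (N : 'M[R]_n.+1) (g : {poly R}) :
  g \is monic ->
  horner_mx N g = \sum_(j < (size g).-1) g`_j *: N ^+ j + N ^+ (size g).-1.
Proof.
move=> g_monic; rewrite -{1}[g]coefK poly_def rmorph_sum /=.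
have Dd : (size g).-1.+1 = size g by rewrite prednK // size_poly_gt0 monic_neq0.
rewrite -[in LHS]Dd big_ord_recr /= -lead_coefE (monicP g_monic) scale1r.
rewrite rmorphXn /= horner_mx_X; congr (_ + _); apply: eq_bigr => j _.
by rewrite linearZ /= rmorphXn /= horner_mx_X.
Qed.

Definition krylov_mx (R : pzRingType) n (N : 'M[R]_n) d (v : 'rV[R]_n) : 'M[R]_(d, n) :=
  \matrix_(i < d) (v *m N ^+ i).

Section Krylov.

Variables (R : comNzRingType) (n : nat) (N : 'M[R]_n.+1).

Lemma mul_krylov_mx d v (w : 'rV_d) :
  w *m krylov_mx N d v = v *m horner_mx N (rVpoly w).
Proof.
rewrite mulmx_sum_row {2}(row_sum_delta w) linear_sum rmorph_sum /= mulmx_sumr.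
apply: eq_bigr => i _.
by rewrite rowK !linearZ /= rVpoly_delta rmorphXn /= horner_mx_X scalemxAr.
Qed.

Lemma krylov_mx_companion (g : {poly R}) v :
  g \is monic -> v *m horner_mx N g = 0 ->
  krylov_mx N (size g).-1 v *m N = companionmx g *m krylov_mx N (size g).-1 v.
Proof.
move=> g_monic vg; apply/row_matrixP => i.
rewrite row_mul rowK -mulmxA mulmxE -exprSr row_mul.
have [i_small | i_last] := ltnP i.+1 (size g).-1.
  by rewrite rowE mulmx_delta_companion -rowE rowK.
have Di : i.+1 = (size g).-1 by apply/eqP; rewrite eqn_leq ltn_ord i_last.
rewrite [in RHS]mulmx_sum_row Di.
move: vg; rewrite horner_mx_monic // mulmxDr => /eqP; rewrite addrC addr_eq0 => /eqP ->.
rewrite mulmx_sumr -sumrN; apply: eq_bigr => j _.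
by rewrite rowK !mxE -[X in _ == X.-1]Di eqxx scaleNr -scalemxAr.
Qed.

End Krylov.

Lemma map_krylov_mx (R S : comNzRingType) (f : {rmorphism R -> S}) n
    (N : 'M[R]_n.+1) d v :
  map_mx f (krylov_mx N d v) = krylov_mx (map_mx f N) d (map_mx f v).
Proof.
by apply/row_matrixP => i; rewrite -map_row !rowK map_mxM rmorphXn.
Qed.

(* Modulo the irreducible g, every nonzero polynomial c of degree < deg g is
   invertible, so v can be recovered from v c(N) inside the N-stable W. *)
Lemma col_mx_krylov_free (F : fieldType) n (N : 'M[F]_n.+1) m
    (W : 'M[F]_(m, n.+1)) (g : {poly F}) (v : 'rV_n.+1) d :
  (d < size g)%N -> irreducible_poly g -> v *m horner_mx N g = 0 ->
  stablemx W N -> row_free W -> ~~ (v <= W)%MS ->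
  row_free (col_mx (krylov_mx N d v) W).
Proof.
move=> d_lt g_irr vg W_stable W_free vW; apply: row_free_col_mx => // w.
rewrite mul_krylov_mx; set c := rVpoly w.
have [c0 | c_neq0] := eqVneq c 0; first by move=> _; rewrite -[w]rVpolyK -/c c0 linear0.
move=> vcW; case/negP: vW.
have /Bezout_eq1_coprimepP [[a b] /= Dab] : coprimep g c.
  rewrite irreducible_poly_coprime //; apply/negP => /(dvdp_leq c_neq0).
  by rewrite leqNgt (leq_ltn_trans (size_poly _ _) d_lt).
have -> : v = v *m horner_mx N c *m horner_mx N b.
  have : v *m horner_mx N (a * g + b * c) = v by rewrite Dab -polyC1 horner_mx_C mulmx1.
  rewrite rmorphD /= mulmxDr (mulrC a) (mulrC b) !horner_mxM !mulmxA vg mul0mx.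
  by rewrite add0r => ->.
have W_stable' : stablemx W (horner_mx N b).
  by rewrite -(eqmx_stable _ (genmxE W)) horner_mx_stable // (eqmx_stable _ (genmxE W)).
exact: submx_trans (submxMr _ vcW) W_stable'.
Qed.

Local Notation Qmx := (map_mx (intr : int -> rat)).
Local Notation pZtoQ := (map_poly (intr : int -> rat)).

Lemma Qmx_inj m n : injective (Qmx : 'M[int]_(m, n) -> 'M[rat]_(m, n)).
Proof.
by move=> A B /matrixP AB; apply/matrixP => i j; have := AB i j; rewrite !mxE => /intr_inj.
Qed.

Lemma int_rV_scale n (v : 'rV[rat]_n) :
  exists2 D : int, D != 0 & exists vZ : 'rV[int]_n, Qmx vZ = D%:~R *: v.
Proof.
have [p [D D_neq0 Dv]] := rat_poly_scale (rVpoly v).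
exists D => //; exists (\row_i p`_i); apply/rowP => i; rewrite !mxE.
have := congr1 (fun q : {poly rat} => q`_i) Dv; rewrite /= coef_rVpoly_ord => ->.
by rewrite coefZ coef_map /= mulrA mulfV ?mul1r ?intr_eq0.
Qed.

Lemma irreducible_polyZ (F : fieldType) (c : F) (g : {poly F}) :
  c != 0 -> irreducible_poly g -> irreducible_poly (c *: g).
Proof.
move=> c_neq0 [g_gt1 g_irr]; split; first by rewrite size_scale.
move=> q q_neq1; rewrite dvdpZr // => qg.
by apply: eqp_trans (g_irr q q_neq1 qg) _; rewrite eqp_sym eqp_scale.
Qed.

(* By Gauss's lemma an irreducible rational factor of a monic integer polynomial
   is, up to a scalar, a monic integer polynomial. *)
Lemma monic_int_irreducible_factor (p : {poly int}) (g : {poly rat}) :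
  p \is monic -> irreducible_poly g -> g %| pZtoQ p ->
  exists2 g' : {poly int}, g' \is monic /\ irreducible_poly g' &
    exists2 c : rat, c != 0 & pZtoQ g' = c *: g.
Proof.
move=> p_monic g_irr /dvdpP_rat_int [g2 [a a_neq0 Dg] [r Dp]].
have lead_unit : lead_coef g2 * lead_coef r = 1.
  by rewrite -lead_coefM -Dp (monicP p_monic).
have r_neq0 : lead_coef r != 0.
  by apply/eqP => r0; move: lead_unit; rewrite r0 mulr0 => /eqP; rewrite eq_sym oner_eq0.
have Dg' : pZtoQ (lead_coef r *: g2) = ((lead_coef r)%:~R / a) *: g.
  by rewrite map_polyZ /= Dg scalerA mulfVK.
have c_neq0 : (lead_coef r)%:~R / a != 0 by rewrite mulf_neq0 ?invr_eq0 ?intr_eq0.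
exists (lead_coef r *: g2); last by exists ((lead_coef r)%:~R / a).
split; first by rewrite monicE lead_coefZ mulrC lead_unit.
by apply/irreducible_rat_int; rewrite Dg'; apply: irreducible_polyZ.
Qed.

Lemma monic_irreducible_over_Z (g : {poly int}) :
  g \is monic -> irreducible_poly g -> irreducible_over_Z g.
Proof.
move=> g_monic [g_gt1 g_irr]; have g_neq0 := monic_neq0 g_monic.
split=> //; split.
  by rewrite poly_unitE negb_and neq_ltn g_gt1 orbT.
move=> a b Dg.
have a_neq0 : a != 0 by apply: contra_neq g_neq0 => a0; rewrite Dg a0 mul0r.
have b_neq0 : b != 0 by apply: contra_neq g_neq0 => b0; rewrite Dg b0 mulr0.
have lead_unit : lead_coef a * lead_coef b = 1 by rewrite -lead_coefM -Dg (monicP g_monic).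
have [a1 | a_neq1] := eqVneq (size a) 1%N.
  left; rewrite poly_unitE a1 /=; apply/unitrP; exists (lead_coef b).
  by rewrite lead_coefE a1 /= in lead_unit; rewrite mulrC lead_unit.
right; have /eqp_size size_a : a %= g by rewrite g_irr // Dg dvdp_mulr.
have b1 : size b = 1%N.
  move: (size_poly_gt0 a) (size_poly_gt0 b) size_a; rewrite a_neq0 b_neq0 Dg size_mul //.
  by move: (size a) (size b) => x y; rewrite -subn1; lia.
move: lead_unit b_neq0; rewrite (size1_polyC (eq_leq b1)) lead_coefC polyC_eq0 => lead_unit c_neq0.
rewrite poly_unitE size_polyC c_neq0 coefC /=; apply/unitrP; exists (lead_coef a).
by split; last rewrite mulrC; exact: lead_unit.
Qed.

Section IntegerKrylovBlocks.

Variables (n : nat) (N : 'M[int]_n.+1).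
Hypothesis N_reduced : horner_reduced (Qmx N).

Definition irr_annihilator (x : {poly int} * 'rV[int]_n.+1) :=
  [/\ x.1 \is monic, irreducible_poly x.1 & x.2 *m horner_mx N x.1 = 0].

Definition krylov_blocks (s : seq ({poly int} * 'rV[int]_n.+1)) :=
  \mxcol_(i < size s) krylov_mx N (size (nth (0, 0) s i).1).-1 (nth (0, 0) s i).2.

Definition blocks_height (s : seq ({poly int} * 'rV[int]_n.+1)) :=
  (\sum_(i < size s) (size (nth (0%R, 0%R) s i).1).-1)%N.

Lemma krylov_blocks_companion s : {in s, forall x, irr_annihilator x} ->
  krylov_blocks s *m N
    = \mxdiag_(i < size s) companionmx (nth (0, 0) s i).1 *m krylov_blocks s.
Proof.
move=> s_irr; rewrite /krylov_blocks mxcol_mul mul_mxdiag_mxcol; apply: eq_mxcol => i.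
by have [g_monic _ vg] := s_irr _ (mem_nth (0, 0) (ltn_ord i)); apply: krylov_mx_companion.
Qed.

Lemma blocks_height_cons x s :
  blocks_height (x :: s) = ((size x.1).-1 + blocks_height s)%N.
Proof. by rewrite /blocks_height big_ord_recl. Qed.

Lemma blocks_height_free s : row_free (Qmx (krylov_blocks s)) ->
  (blocks_height s <= n.+1)%N.
Proof. by rewrite /row_free /blocks_height => /eqP <-; apply: rank_leq_col. Qed.

Lemma krylov_blocks_extend s :
  {in s, forall x, irr_annihilator x} -> row_free (Qmx (krylov_blocks s)) ->
  (blocks_height s < n.+1)%N ->
  exists2 x, irr_annihilator x & row_free (Qmx (krylov_blocks (x :: s))).
Proof.
move=> s_irr W_free s_lt; set W := Qmx (krylov_blocks s).
have W_stable : stablemx W (Qmx N).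
  by rewrite /W -map_mxM krylov_blocks_companion // map_mxM submxMl.
have [u uW] : exists u : 'rV_n.+1, ~~ (u <= W)%MS.
  have /row_subPn [i ?] : ~~ (1%:M <= W)%MS.
    apply: contraL s_lt => /mxrankS; rewrite mxrank1 -leqNgt.
    by move: W_free; rewrite /row_free => /eqP ->.
  by exists (row i 1%:M).
have u_min : u *m horner_mx (Qmx N) (mxminpoly (Qmx N)) = 0.
  by rewrite mx_root_minpoly mulmx0.
have [g [g_irr gm] [v vW vg]] :=
  irreducible_annihilator_outside N_reduced (dvdpp _) u_min uW.
have g_char : g %| pZtoQ (char_poly N).
  by rewrite map_char_poly (dvdp_trans gm) ?mxminpoly_dvd_char.
have [gZ [gZ_monic gZ_irr] [c _ DgZ]] :=
  monic_int_irreducible_factor (char_poly_monic N) g_irr g_char.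
have [D D_neq0 [vZ DvZ]] := int_rV_scale v.
have vZg : vZ *m horner_mx N gZ = 0.
  apply: Qmx_inj.
  rewrite map_mxM map_horner_mx DgZ DvZ map_mx0 linearZ /= -scalemxAr -scalemxAl.
  by rewrite vg !scaler0.
exists (gZ, vZ) => //.
rewrite /krylov_blocks mxcol_recu map_castmx row_free_castmx map_col_mx map_krylov_mx.
apply: (col_mx_krylov_free (g := pZtoQ gZ)) => //.
- by rewrite size_rat_int_poly prednK // ltnW // gZ_irr.1.
- exact/irreducible_rat_int.
- by rewrite -map_horner_mx -map_mxM vZg map_mx0.
- apply: contra vW; rewrite DvZ => /(scalemx_sub (D%:~R)^-1).
  by rewrite scalerA mulVf ?scale1r ?intr_eq0.
Qed.

Lemma exists_full_krylov_blocks :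
  exists s, [/\ {in s, forall x, irr_annihilator x},
    row_free (Qmx (krylov_blocks s)) & blocks_height s = n.+1].
Proof.
suff grow k : (k <= n.+1)%N -> exists s, [/\ {in s, forall x, irr_annihilator x},
    row_free (Qmx (krylov_blocks s)) & (k <= blocks_height s)%N].
  have [s [s_irr s_free s_ge]] := grow _ (leqnn _).
  by exists s; split => //; apply/eqP; rewrite eqn_leq s_ge blocks_height_free.
elim: k => [|k IH] k_le.
  exists [::]; split => //; rewrite /row_free eqn_leq rank_leq_row.
  by apply: (@leq_trans 0); rewrite ?big_ord0.
have [s [s_irr s_free s_ge]] := IH (ltnW k_le).
have [s_gt | s_le] := leqP k.+1 (blocks_height s); first by exists s.
have s_lt : (blocks_height s < n.+1)%N := leq_trans s_le k_le.
have [x x_irr xs_free] := krylov_blocks_extend s_irr s_free s_lt.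
exists (x :: s); split => //.
  by move=> y; rewrite in_cons => /predU1P [-> | /s_irr].
have [_ [x_gt1 _] _] := x_irr.
rewrite blocks_height_cons.
by move: (blocks_height s) (size x.1) s_ge x_gt1 => h d; rewrite -subn1; lia.
Qed.

End IntegerKrylovBlocks.

Lemma trmxX (R : comNzRingType) n (A : 'M[R]_n.+1) i : (A ^+ i)^T = A^T ^+ i.
Proof.
elim: i => [|i IH]; first by rewrite !expr0 trmx1.
by rewrite exprS -mulmxE trmx_mul IH mulmxE -exprSr.
Qed.

Lemma horner_mx_trmx (R : comNzRingType) n (A : 'M[R]_n.+1) (p : {poly R}) :
  (horner_mx A p)^T = horner_mx A^T p.
Proof.
rewrite -[p]coefK poly_def !rmorph_sum linear_sum /=; apply: eq_bigr => i _.
by rewrite !linearZ /= !rmorphXn /= !horner_mx_X trmxX.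
Qed.

Lemma horner_reduced_trmx (R : comNzRingType) n (A : 'M[R]_n.+1) :
  horner_reduced A -> horner_reduced A^T.
Proof.
move=> A_reduced p; rewrite -horner_mx_trmx -trmxX => /(congr1 trmx).
by rewrite trmxK trmx0 => /A_reduced ->; rewrite trmx0.
Qed.

Lemma char_poly_trmx (R : comNzRingType) n (A : 'M[R]_n) :
  char_poly A^T = char_poly A.
Proof.
rewrite /char_poly -det_tr; congr (\det _); apply/matrixP => i j; rewrite !mxE.
by case: (eqVneq i j) => [-> | ij]; rewrite ?eqxx // eq_sym (negPf ij).
Qed.

Lemma castmx_intertwine (R : pzRingType) m1 m2 n (e : m1 = m2) (W : 'M[R]_(m1, n))
    (D : 'M[R]_m1) (N : 'M[R]_n) :
  W *m N = D *m W -> castmx (e, erefl) W *m N = castmx (e, e) D *m castmx (e, erefl) W.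
Proof. by case: m2 / e; rewrite !castmx_id. Qed.

(* Krylov blocks are stacked as rows, so the construction runs on A^T. *)
Lemma int_mx_companion_decomposition n (A : 'M[int]_n.+1) :
  horner_reduced (Qmx A) ->
  exists (P : 'M[int]_n.+1) (k : nat) (sz : 'I_k -> nat)
    (Bl : forall i : 'I_k, 'M[int]_(sz i)) (e : (\sum_(i < k) sz i)%N = n.+1),
  [/\ \det P != 0, A *m P = P *m castmx (e, e) (\mxdiag_(i < k) Bl i)
    & forall i, irreducible_over_Z (char_poly (Bl i))].
Proof.
move=> A_reduced; have AT_reduced : horner_reduced (Qmx A^T).
  by rewrite -map_trmx; apply: horner_reduced_trmx.
have [s [s_irr s_free Dh]] := exists_full_krylov_blocks AT_reduced.
set K := castmx (Dh, erefl) (krylov_blocks A^T s).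
exists K^T, (size s), (fun i => (size (nth (0, 0) s i).1).-1),
  (fun i => (companionmx (nth (0, 0) s i).1)^T), Dh; split.
- rewrite det_tr -(intr_eq0 rat) -det_map_mx -unitfE -unitmxE -row_free_unit.
  by rewrite map_castmx row_free_castmx.
- have := castmx_intertwine Dh (krylov_blocks_companion s_irr).
  by move=> /(congr1 trmx); rewrite !trmx_mul trmxK !trmx_cast tr_mxdiag.
- move=> i; have [g_monic g_irr _] := s_irr _ (mem_nth (0, 0) (ltn_ord i)).
  by rewrite char_poly_trmx companionmxK //; apply: monic_irreducible_over_Z.
Qed.

Lemma horner_mx_intertwine (R : comNzRingType) n q (A : 'M[R]_n.+1)
    (B : 'M[R]_(n.+1, q.+1)) (M : 'M[R]_q.+1) :
  A *m B = B *m M -> forall p, horner_mx A p *m B = B *m horner_mx M p.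
Proof.
move=> AB; elim/poly_ind => [|p c IH]; first by rewrite !rmorph0 mul0mx mulmx0.
rewrite !rmorphD !rmorphM /= !horner_mx_X !horner_mx_C -!mulmxE mulmxDl mulmxDr.
by rewrite -mulmxA AB mulmxA IH -mulmxA mul_scalar_mx mul_mx_scalar.
Qed.

Lemma scal_mulmx (R : realType) n (S M : 'M[R]_n) u v :
  scal S (M *m u) (M *m v) = scal (M^T *m S *m M) u v.
Proof. by rewrite /scal trmx_mul !mulmxA. Qed.

Lemma scal_delta (R : realType) n (S : 'M[R]_n) (i j : 'I_n) :
  scal S (delta_mx i 0) (delta_mx j 0) = S i j.
Proof. by rewrite /scal trmx_delta -rowE -colE !mxE. Qed.

Lemma scalar_product_eq0 (R : realType) n (S : 'M[R]_n) (x : 'cV_n) :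
  scalar_product S -> scal S x x = 0 -> x = 0.
Proof. by move=> [_ S_pos] Sxx; apply: contra_eq Sxx => /S_pos /gt_eqF ->. Qed.

Section Similarity.

Variables (R : realType) (q : nat) (S M : 'M[R]_q.+1) (mu : R).
Hypotheses (S_sp : scalar_product S) (mu_gt0 : 0 < mu).
Hypothesis M_sim : forall u v, scal S (M *m u) (M *m v) = mu ^+ 2 * scal S u v.

Lemma similarity_gram : M^T *m S *m M = mu ^+ 2 *: S.
Proof.
apply/matrixP => i j; rewrite -scal_delta -scal_mulmx M_sim scal_delta.
by rewrite mxE.
Qed.

Lemma similarity_unitmx : M \in unitmx.
Proof.
rewrite unitmxE unitfE -det_tr; apply/negP => /det0P [v v_neq0 vM].
have Mv : M *m v^T = 0 by rewrite -[M]trmxK -trmx_mul vM trmx0.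
have /(scalar_product_eq0 S_sp) /eqP : scal S v^T v^T = 0.
  have := M_sim v^T v^T; rewrite Mv /scal mulmx0 mxE => /esym /eqP.
  by rewrite mulf_eq0 expf_eq0 (gt_eqF mu_gt0) => /eqP.
by rewrite trmx_eq0 (negPf v_neq0).
Qed.

(* T = p(M) is S-normal: its S-adjoint p(mu^2 M^-1) commutes with it, and a
   square-zero normal operator vanishes. *)
Lemma similarity_horner_reduced : horner_reduced M.
Proof.
move=> p Tp2; pose M' := mu ^+ 2 *: invmx M.
have MS : M^T *m S = S *m M'.
  by rewrite /M' -scalemxAr scalemxAl -similarity_gram mulmxK // similarity_unitmx.
have M'M : comm_mx M M'.
  by rewrite /comm_mx /M' -scalemxAr -scalemxAl mulmxV ?mulVmx ?similarity_unitmx.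
set T := horner_mx M p; set T' := horner_mx M' p.
have TS : T^T *m S = S *m T' by rewrite horner_mx_trmx (horner_mx_intertwine MS).
have T'S : T'^T *m S = S *m T.
  by case: S_sp => S_sym _; rewrite -[S in LHS]S_sym -trmx_mul -TS trmx_mul trmxK S_sym.
have TT' : T *m T' = T' *m T by apply/comm_horner_mx/comm_mx_horner.
have TT : T *m T = 0 by rewrite mulmxE -expr2.
have T0 (x : 'cV_q.+1) : T *m x = 0.
  have T2x : T *m (T *m x) = 0 by rewrite mulmxA TT mul0mx.
  have T'Tx : T' *m (T *m x) = 0.
    apply: (scalar_product_eq0 S_sp); rewrite scal_mulmx /scal T'S.
    by rewrite -(mulmxA S T T') TT' !mulmxA -!mulmxA T2x !mulmx0 mxE.
  apply: (scalar_product_eq0 S_sp); rewrite scal_mulmx /scal TS !mulmxA.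
  by rewrite -(mulmxA _ T x) -(mulmxA _ T' _) T'Tx !mulmx0 mxE.
apply/matrixP => i j; have /matrixP /(_ i 0) := T0 (delta_mx j 0).
by rewrite -colE !mxE.
Qed.

End Similarity.

Definition dense_mod_int (R : realType) n q (B : 'M[R]_(n, q)) :=
  forall (x : 'cV[R]_n) (eps : R), 0 < eps ->
    exists (c : 'cV[R]_q) (z : 'cV[int]_n),
      forall i, `| x i 0 - (B *m c) i 0 - (z i 0)%:~R | < eps.

Lemma half_int_dist (R : realType) (m : int) : 4^-1 <= `|2^-1 - m%:~R : R|.
Proof.
have [m_le0 | m_gt0] := lerP m 0.
  have : m%:~R <= 0 :> R by rewrite -(mulr0z 1) ler_int.
  by move=> ?; rewrite ger0_norm; lra.
have : 1 <= m%:~R :> R by rewrite -(mulr1z 1) ler_int -gtz0_ge1.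
by move=> ?; rewrite ler0_norm; lra.
Qed.

(* Pairing with an integer vector a orthogonal to E^q is integral on Z^n, so
   by density a.x is close to an integer for every x; a.x = 1/2 is not. *)
Lemma dense_mod_int_int_orthogonal (R : realType) n q (B : 'M[R]_(n, q)) :
  dense_mod_int B -> forall a : 'rV[int]_n, mxZR R a *m B = 0 -> a = 0.
Proof.
move=> B_dense a aB; apply/rowP => j; rewrite mxE; apply/eqP/negPn/negP => aj_neq0.
pose W : R := \sum_i `|(a 0 i)%:~R|.
have W1_gt0 : 0 < W + 1 by rewrite -[0]addr0 ler_ltD ?sumr_ge0.
pose eps : R := (4 * (W + 1))^-1.
have eps_gt0 : 0 < eps by rewrite invr_gt0 mulr_gt0.
pose x : 'cV[R]_n := \col_i (if i == j then (2 * (a 0 j)%:~R)^-1 else 0).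
have [c [z xcz]] := B_dense x eps eps_gt0.
pose y := x - B *m c - mxZR R z.
have ax : (mxZR R a *m x) 0 0 = 2^-1.
  rewrite !mxE (bigD1 j) //= big1 => [|i /negPf ij]; last by rewrite !mxE ij mulr0.
  by rewrite !mxE eqxx addr0 invfM mulrCA mulfV ?mulr1 ?intr_eq0.
have ay : (mxZR R a *m y) 0 0 = 2^-1 - ((a *m z) 0 0)%:~R.
  rewrite -ax /y !mulmxBr mulmxA aB mul0mx subr0 /mxZR -map_mxM.
  by rewrite !mxE.
have ay_small : `|(mxZR R a *m y) 0 0| < 4^-1.
  rewrite mxE; apply: le_lt_trans; first exact: ler_norm_sum.
  apply: (@le_lt_trans _ _ (W * eps)).
    rewrite /W mulr_suml; apply: ler_sum => i _; rewrite normrM [in leLHS]mxE.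
    by apply/ler_wpM2l/ltW; last by have := xcz i; rewrite /y /mxZR !mxE.
  have -> : 4^-1 = (W + 1) * eps :> R by rewrite /eps invfM mulrCA mulfV ?mulr1 ?gt_eqF.
  by rewrite ltr_pM2r // ltrDl.
by move: ay_small; rewrite ay ltNge half_int_dist.
Qed.

Lemma dense_mod_int_rat_orthogonal (R : realType) n q (B : 'M[R]_(n, q)) :
  dense_mod_int B -> forall w : 'rV[rat]_n, map_mx ratr w *m B = 0 -> w = 0.
Proof.
move=> B_dense w wB; have [D D_neq0 [wZ DwZ]] := int_rV_scale w.
have wZB : mxZR R wZ *m B = 0.
  have -> : mxZR R wZ = (D%:~R : R) *: map_mx ratr w.
    apply/rowP => i; have /rowP /(_ i) := congr1 (map_mx (ratr : rat -> R)) DwZ.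
    by rewrite /mxZR !mxE ratr_int rmorphM /= ratr_int.
  by rewrite -scalemxAl wB scaler0.
move: DwZ; rewrite (dense_mod_int_int_orthogonal B_dense wZB) map_mx0.
by move=> /esym /eqP; rewrite scaler_eq0 intr_eq0 (negPf D_neq0) => /eqP.
Qed.

Lemma row_mx_unit_mulmx_eq0 (F : fieldType) q r m (B1 : 'M[F]_(q + r, q))
    (B2 : 'M[F]_(q + r, r)) (X : 'M[F]_(q, m)) :
  row_mx B1 B2 \in unitmx -> B1 *m X = 0 -> X = 0.
Proof.
move=> B_unit B1X; have := mul_row_col B1 B2 X (0 : 'M_(r, m)).
rewrite B1X mulmx0 addr0 => /(congr1 (mulmx (invmx (row_mx B1 B2)))).
rewrite mulKmx // mulmx0 => /(congr1 usubmx); rewrite col_mxKu.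
by rewrite (_ : usubmx _ = 0) // linear0.
Qed.

Lemma invariant_dense_horner_reduced (R : realType) q r
    (B1 : 'M[R]_(q.+1 + r, q.+1)) (B2 : 'M[R]_(q.+1 + r, r)) (S M1 : 'M[R]_q.+1)
    (A : 'M[int]_(q.+1 + r)) (mu : R) :
  row_mx B1 B2 \in unitmx -> dense_mod_int B1 -> scalar_product S -> 0 < mu ->
  (forall u v, scal S (M1 *m u) (M1 *m v) = mu ^+ 2 * scal S u v) ->
  mxZR R A *m B1 = B1 *m M1 -> horner_reduced (Qmx A).
Proof.
move=> B_unit B1_dense S_sp mu_gt0 M1_sim AB1 p Ap2.
have DAR : map_mx ratr (Qmx A) = mxZR R A.
  by apply/matrixP => i j; rewrite /mxZR !mxE ratr_int.
set T := horner_mx (Qmx A) p; set pR := map_poly (ratr : rat -> R) p.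
have TB1 : map_mx ratr T *m B1 = B1 *m horner_mx M1 pR.
  by rewrite map_horner_mx DAR; apply: horner_mx_intertwine.
have M1p0 : horner_mx M1 pR = 0.
  apply: (similarity_horner_reduced S_sp mu_gt0 M1_sim).
  apply: (row_mx_unit_mulmx_eq0 B_unit); rewrite expr2 -mulmxE mulmxA -TB1.
  by rewrite -mulmxA -TB1 mulmxA -map_mxM mulmxE -expr2 Ap2 map_mx0 mul0mx.
apply/row_matrixP => i; rewrite row0; apply: (dense_mod_int_rat_orthogonal B1_dense).
by rewrite map_row -row_mul TB1 M1p0 mulmx0 row0.
Qed.

Theorem mainTheorem15 (R : realType) (q r : nat)
  (B1 : 'M[R]_(q + r, q)) (B2 : 'M[R]_(q + r, r))
  (S : 'M[R]_q) (A : 'M[int]_(q + r)) (M1 : 'M[R]_q) (M2 : 'M[R]_r) :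
  (1 <= q)%N ->
  row_mx B1 B2 \in unitmx ->
  (forall (x : 'cV[R]_(q + r)) (eps : R), 0 < eps ->
     exists (c : 'cV[R]_q) (z : 'cV[int]_(q + r)),
       forall i, `| x i 0 - (B1 *m c) i 0 - (z i 0)%:~R | < eps) ->
  scalar_product S ->
  A \in unitmx ->
  mxZR R A *m B1 = B1 *m M1 ->
  mxZR R A *m B2 = B2 *m M2 ->
  (exists mu : R, 0 < mu /\
     forall u v : 'cV[R]_q, scal S (M1 *m u) (M1 *m v) = mu ^+ 2 * scal S u v) ->
  exists (P : 'M[int]_(q + r)) (k : nat) (sz : 'I_k -> nat)
         (Bl : forall i : 'I_k, 'M[int]_(sz i))
         (e : (\sum_(i < k) sz i)%N = (q + r)%N),
    mxZR R P \in unitmx /\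
    mxZR R A *m mxZR R P = mxZR R P *m mxZR R (castmx (e, e) (\mxdiag_(i < k) Bl i)) /\
    forall i : 'I_k, irreducible_over_Z (char_poly (Bl i)).
Proof.
case: q B1 B2 S A M1 => [//|q] B1 B2 S A M1 _ B_unit B1_dense S_sp _ AB1 _.
case=> mu [mu_gt0 M1_sim].
have A_reduced := invariant_dense_horner_reduced B_unit B1_dense S_sp mu_gt0 M1_sim AB1.
have [P [k [sz [Bl [e [detP AP Bl_irr]]]]]] := int_mx_companion_decomposition A_reduced.
exists P, k, sz, Bl, e; split; first by rewrite unitmxE unitfE det_map_mx intr_eq0.
by rewrite /mxZR -!map_mxM AP.
Qed.
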